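(* Let $\mathbb{R}^4_+ := \{x \in \mathbb{R}^4 : x_2^2 + x_3^2 + x_4^2 \le 2x_1x_2 \text{ and } x_1 \ge 0\}$ and let $A \in \mathbb{R}^{4\times 4}$ be the block diagonal matrix $$A = \begin{pmatrix} 0 & 1 & 0 & 0\\ 0 & 0 & 0 & 0 \\ 0 & 0 & 0 & 4\pi \\ 0 & 0 & -\pi & 0\end{pmatrix}.$$ Then $\mathbb{R}^4_+$ is a closed cone with non-empty interior, and the semigroup $(e^{tA})_{t\ge 0}$ is individually eventually nonnegative but not uniformly eventually nonnegative with respect to $\mathbb{R}^4_+$.
   Context: Let $X$ be a finite-dimensional real vector space, ordered by a closed cone $X_+$ with non-empty interior, and $A: X\to X$ linear. $(e^{tA})_{t\ge0}$ is uniformly eventually nonnegative if there is $t_0\ge 0$ with $e^{tA}X_+\subseteq X_+$ for all $t\ge t_0$; individually eventually nonnegative if for each $x\in X_+$ there is $t_0\ge0$ with $e^{tA}x\in X_+$ for all $t\ge t_0$. *)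

From HB Require Import structures.
From mathcomp Require Import all_boot all_order all_algebra.
From mathcomp Require Import all_classical all_reals all_analysis.
Set Implicit Arguments. Unset Strict Implicit. Unset Printing Implicit Defensive.
Import Order.TTheory GRing.Theory Num.Theory.
Import numFieldNormedType.Exports.
Local Open Scope classical_set_scope.
Local Open Scope ring_scope.

Definition expm (R : realType) (n : nat) (M : 'M[R]_n.+1) : 'M[R]_n.+1 :=
  limn (series (fun k : nat => (k`!%:R)^-1 *: M ^+ k)).

Definition is_cone (R : realType) (n : nat) (K : set 'cV[R]_n) : Prop :=
  [/\ (forall x y, K x -> K y -> K (x + y)),
      (forall (a : R) x, 0 <= a -> K x -> K (a *: x)) &
      (forall x, K x -> K (- x) -> x = 0)].

Definition unif_ev_nonneg (R : realType) (n : nat) (K : set 'cV[R]_n.+1)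
  (A : 'M[R]_n.+1) : Prop :=
  exists t0 : R, 0 <= t0 /\
    forall t : R, t0 <= t -> forall x, K x -> K (expm (t *: A) *m x).

Definition indiv_ev_nonneg (R : realType) (n : nat) (K : set 'cV[R]_n.+1)
  (A : 'M[R]_n.+1) : Prop :=
  forall x, K x -> exists t0 : R, 0 <= t0 /\
    forall t : R, t0 <= t -> K (expm (t *: A) *m x).

(* The cone R^4_+ = {x : x2^2 + x3^2 + x4^2 <= 2 x1 x2, x1 >= 0}
   (coordinates x1..x4 are the entries 0..3 of a column vector). *)
Definition K4 (R : realType) : set 'cV[R]_4 :=
  [set x | (x 1%R 0%R) ^+ 2 + (x 2%:R 0%R) ^+ 2 + (x 3%:R 0%R) ^+ 2
             <= 2 * (x 0%R 0%R) * (x 1%R 0%R)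
           /\ 0 <= x 0%R 0%R].

Definition A4 (R : realType) : 'M[R]_4 :=
  \matrix_(i < 4, j < 4)
    (if (i == 0%N :> nat) && (j == 1%N :> nat) then 1
     else if (i == 2%N :> nat) && (j == 3%N :> nat) then 4 * pi
     else if (i == 3%N :> nat) && (j == 2%N :> nat) then - pi
     else 0).

From HB Require Import structures.
From mathcomp Require Import all_boot all_order all_algebra.
From mathcomp Require Import all_classical all_reals all_analysis.
From mathcomp Require Import ring lra.
Import Order.TTheory GRing.Theory Num.Theory.
Import numFieldNormedType.Exports.
Set Implicit Arguments. Unset Strict Implicit. Unset Printing Implicit Defensive.
Local Open Scope classical_set_scope.
Local Open Scope ring_scope.

(* The upper block of A is nilpotent
   and the lower block J satisfies J^2 = -(2π)^2, so the powers A^k are given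
   by parity signs, and summing the exponential series termwise yields
     e^{tA} = P + tQ + cos(2πt) C + sin(2πt) S,
   i.e. e^{tA}(p,a,c,d) = (p + ta, a, cos·c + 2sin·d, -sin/2·c + cos·d).
   The cone condition is studied on four real coordinates ([coneK]): it is a
   rotated second-order cone, stable under sums by Cauchy-Schwarz and AM-GM.
   The lower block preserves c^2 + 4d^2, so the rotated part stays bounded
   while the condition gains 2ta^2: each orbit enters K eventually.  At the
   times where cos(2πt) = 0 and sin(2πt) = 1 a vector with large d leaves K,
   which rules out a uniform threshold.  Closedness and the interior point
   come from writing K as a preimage under continuous maps. *)

Section BlockMatrices.
Variable R : comPzRingType.

Definition blk (a00 a01 a11 a22 a23 a32 a33 : R) : 'M[R]_4 :=
  \matrix_(i < 4, j < 4)
    (if (i == 0%N :> nat) && (j == 0%N :> nat) then a00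
     else if (i == 0%N :> nat) && (j == 1%N :> nat) then a01
     else if (i == 1%N :> nat) && (j == 1%N :> nat) then a11
     else if (i == 2%N :> nat) && (j == 2%N :> nat) then a22
     else if (i == 2%N :> nat) && (j == 3%N :> nat) then a23
     else if (i == 3%N :> nat) && (j == 2%N :> nat) then a32
     else if (i == 3%N :> nat) && (j == 3%N :> nat) then a33
     else 0).

Lemma blk_mul a00 a01 a11 a22 a23 a32 a33 b00 b01 b11 b22 b23 b32 b33 :
  blk a00 a01 a11 a22 a23 a32 a33 *m blk b00 b01 b11 b22 b23 b32 b33 =
  blk (a00 * b00) (a00 * b01 + a01 * b11) (a11 * b11)
      (a22 * b22 + a23 * b32) (a22 * b23 + a23 * b33)
      (a32 * b22 + a33 * b32) (a32 * b23 + a33 * b33).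
Proof.
apply/matrixP => i j; rewrite !mxE !big_ord_recl big_ord0 !mxE.
by case: i => [[|[|[|[|i]]]] Hi] //; case: j => [[|[|[|[|j]]]] Hj] //=; ring.
Qed.

Lemma blk_scale k a00 a01 a11 a22 a23 a32 a33 :
  k *: blk a00 a01 a11 a22 a23 a32 a33 =
  blk (k * a00) (k * a01) (k * a11) (k * a22) (k * a23) (k * a32) (k * a33).
Proof.
apply/matrixP => i j; rewrite !mxE.
by case: i => [[|[|[|[|i]]]] Hi] //=; case: j => [[|[|[|[|j]]]] Hj] //=; ring.
Qed.

Lemma blk_add a00 a01 a11 a22 a23 a32 a33 b00 b01 b11 b22 b23 b32 b33 :
  blk a00 a01 a11 a22 a23 a32 a33 + blk b00 b01 b11 b22 b23 b32 b33 =
  blk (a00 + b00) (a01 + b01) (a11 + b11) (a22 + b22) (a23 + b23)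
      (a32 + b32) (a33 + b33).
Proof.
apply/matrixP => i j; rewrite !mxE.
by case: i => [[|[|[|[|i]]]] Hi] //=; case: j => [[|[|[|[|j]]]] Hj] //=; ring.
Qed.

Lemma blk1 : 1 = blk 1 0 1 1 0 0 1.
Proof.
apply/matrixP => i j; rewrite !mxE.
by case: i => [[|[|[|[|i]]]] Hi] //; case: j => [[|[|[|[|j]]]] Hj].
Qed.

End BlockMatrices.

Arguments blk {R}.

Section PowersOfA.
Variable R : realType.

(* The signs of the Taylor coefficients of cos and sin:
   cos_coeff x k = cos_sign k * x^k / k!, and similarly for sin. *)
Definition cos_sign (k : nat) : R := (~~ odd k)%:R * (-1) ^+ k./2.
Definition sin_sign (k : nat) : R := (odd k)%:R * (-1) ^+ k.-1./2.

Lemma cos_signS k : cos_sign k.+1 = - sin_sign k.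
Proof.
rewrite /cos_sign /sin_sign /= negbK; case: (boolP (odd k)) => odd_k /=.
  rewrite uphalf_half odd_k -{2}(odd_double_half k) odd_k add1n /= half_double.
  by rewrite exprS; ring.
by rewrite !mul0r oppr0.
Qed.

Lemma sin_signS k : sin_sign k.+1 = cos_sign k.
Proof. by rewrite /cos_sign /sin_sign /=; case: (odd k); rewrite /= ?mul0r. Qed.

Lemma A4E : A4 R = blk 0 1 0 0 (4 * pi) (- pi) 0.
Proof.
apply/matrixP => i j; rewrite !mxE.
by case: i => [[|[|[|[|i]]]] Hi] //; case: j => [[|[|[|[|j]]]] Hj].
Qed.

Lemma A4X n : A4 R ^+ n =
  blk (n == 0)%:R (n == 1)%:R (n == 0)%:R
      (cos_sign n * (2 * pi) ^+ n) (2 * sin_sign n * (2 * pi) ^+ n)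
      (- (1 / 2) * sin_sign n * (2 * pi) ^+ n) (cos_sign n * (2 * pi) ^+ n).
Proof.
elim: n => [|n IH].
  by rewrite expr0 blk1 /cos_sign /sin_sign /=; congr blk; rewrite !expr0; ring.
rewrite exprS IH A4E -mulmxE blk_mul cos_signS sin_signS.
by congr blk; rewrite ?exprS ?mul0r ?mul1r ?add0r //; field.
Qed.

End PowersOfA.

Lemma series_delta (R : numFieldType) (m : nat) (c : R) :
  series (fun k => (k == m)%:R * c) @ \oo --> c.
Proof.
apply: cvg_near_cst; near=> n.
have m_lt_n : (m < n)%N by near: n; exists m.+1.
rewrite /series /= (bigD1_seq m) ?mem_iota ?iota_uniq ?subn0 //= eqxx mul1r.
by rewrite big1 ?addr0 // => k /negbTE ->; rewrite mul0r.
Unshelve. all: by end_near. Qed.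

Section ExponentialOfA.
Variable R : realType.

Definition Pm : 'M[R]_4 := blk 1 0 1 0 0 0 0.
Definition Qm : 'M[R]_4 := blk 0 1 0 0 0 0 0.
Definition Cm : 'M[R]_4 := blk 0 0 0 1 0 0 1.
Definition Sm : 'M[R]_4 := blk 0 0 0 0 2 (- (1 / 2)) 0.

Lemma A4_series_term (t : R) k :
  (k`!%:R)^-1 *: (t *: A4 R) ^+ k =
  (k == 0)%:R *: Pm + ((k == 1)%:R * t) *: Qm
  + cos_coeff (2 * pi * t) k *: Cm + sin_coeff (2 * pi * t) k *: Sm.
Proof.
rewrite exprZn A4X !blk_scale !blk_add /cos_coeff /sin_coeff /= -exprnP !exprMn.
have k_fact : k`!%:R != 0 :> R by rewrite pnatr_eq0 -lt0n fact_gt0.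
congr blk; rewrite /cos_sign /sin_sign; try (field; exact: k_fact).
all: by case: k {k_fact} => [|[|k]];
  rewrite /= ?fact0 ?expr0 ?expr1 ?invr1 ?mulr0 ?mulr1 ?mul0r ?mul1r ?addr0 ?add0r.
Qed.

Lemma cvg_series_cos (x : R) : series (cos_coeff x) @ \oo --> cos x.
Proof. rewrite unlock; exact: is_cvg_series_cos_coeff. Qed.

Lemma cvg_series_sin (x : R) : series (sin_coeff x) @ \oo --> sin x.
Proof. rewrite unlock; exact: is_cvg_series_sin_coeff. Qed.

Definition expA4 (t : R) : 'M[R]_4 :=
  Pm + t *: Qm + cos (2 * pi * t) *: Cm + sin (2 * pi * t) *: Sm.

Lemma expmA4 (t : R) : expm (t *: A4 R) = expA4 t.
Proof.
apply: cvg_lim => //.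
have -> : series (fun k : nat => (k`!%:R)^-1 *: (t *: A4 R) ^+ k) =
    (fun n => series (fun k : nat => (k == 0)%:R * 1) n *: Pm)
  + (fun n => series (fun k : nat => (k == 1)%:R * t) n *: Qm)
  + (fun n => series (cos_coeff (2 * pi * t)) n *: Cm)
  + (fun n => series (sin_coeff (2 * pi * t)) n *: Sm).
  apply/funext => n; rewrite /series /= (eq_bigr _ (fun k _ => A4_series_term t k)).
  by rewrite !big_split /= !fctE !scaler_suml; under [in RHS]eq_bigr do rewrite mulr1.
have -> : expA4 t = 1 *: Pm + t *: Qm + cos (2 * pi * t) *: Cm + sin (2 * pi * t) *: Sm.
  by rewrite scale1r.
apply: cvgD; [apply: cvgD; [apply: cvgD|]|]; apply: cvgZr_tmp.
- exact: series_delta.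
- exact: series_delta.
- exact: cvg_series_cos.
- exact: cvg_series_sin.
Qed.

End ExponentialOfA.

Arguments expA4 {R}.

Section ConeInequalities.
Variable R : realFieldType.

(* The rotated second-order cone {u^2 + v^2 <= ab, a, b >= 0} is closed under
   addition: the cross term 2(uu' + vv') is bounded by ab' + a'b. *)
Lemma rotated_cone_add (a b u v a' b' u' v' : R) :
  0 <= a -> 0 <= b -> 0 <= a' -> 0 <= b' ->
  u ^+ 2 + v ^+ 2 <= a * b -> u' ^+ 2 + v' ^+ 2 <= a' * b' ->
  (u + u') ^+ 2 + (v + v') ^+ 2 <= (a + a') * (b + b').
Proof.
move=> a0 b0 a'0 b'0 huv hu'v'.
have cauchy_schwarz : (u * u' + v * v') ^+ 2 <= (u ^+ 2 + v ^+ 2) * (u' ^+ 2 + v' ^+ 2).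
  by have := sqr_ge0 (u * v' - v * u'); nra.
have bound : (u ^+ 2 + v ^+ 2) * (u' ^+ 2 + v' ^+ 2) <= (a * b) * (a' * b').
  by apply: ler_pM => //; apply: addr_ge0; apply: sqr_ge0.
have am_gm : 4 * ((a * b) * (a' * b')) <= (a * b' + a' * b) ^+ 2.
  by have := sqr_ge0 (a * b' - a' * b); nra.
have cross_nonneg : 0 <= a * b' + a' * b by apply: addr_ge0; apply: mulr_ge0.
have cross : 2 * (u * u' + v * v') <= a * b' + a' * b by nra.
nra.
Qed.

Definition coneK (p a c d : R) : Prop :=
  a ^+ 2 + c ^+ 2 + d ^+ 2 <= 2 * p * a /\ 0 <= p.

(* In the cone, 0 <= a <= 2p, so K is a rotated second-order cone in a, 2p-a. *)
Lemma coneK_bounds p a c d : coneK p a c d -> 0 <= a /\ a <= 2 * p.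
Proof.
move=> [h p0]; have := sqr_ge0 c; have := sqr_ge0 d.
by split; nra.
Qed.

Lemma coneK_add p a c d p' a' c' d' :
  coneK p a c d -> coneK p' a' c' d' ->
  coneK (p + p') (a + a') (c + c') (d + d').
Proof.
move=> K K'; have [a0 ap] := coneK_bounds K; have [a'0 a'p] := coneK_bounds K'.
case: K K' => h p0 [h' p'0]; split; last exact: addr_ge0.
have := @rotated_cone_add a (2 * p - a) c d a' (2 * p' - a') c' d'.
rewrite !subr_ge0 => /(_ a0 ap a'0 a'p); nra.
Qed.

Lemma coneK_scale k p a c d :
  0 <= k -> coneK p a c d -> coneK (k * p) (k * a) (k * c) (k * d).
Proof.
move=> k0 [h p0]; split; last exact: mulr_ge0.
by have := ler_wpM2l (sqr_ge0 k) h; nra.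
Qed.

Lemma coneK_pointed p a c d :
  coneK p a c d -> coneK (- p) (- a) (- c) (- d) ->
  [/\ p = 0, a = 0, c = 0 & d = 0].
Proof.
move=> [h p0] [_ np0]; have p_eq0 : p = 0 by lra.
rewrite p_eq0 mulr0 mul0r in h.
have := sqr_ge0 a; have := sqr_ge0 c; have := sqr_ge0 d => d2 c2 a2.
by split => //; apply/eqP; rewrite -sqrf_eq0 eq_le sqr_ge0 andbT; lra.
Qed.

Lemma rotation_norm (cs sn c d : R) : cs ^+ 2 + sn ^+ 2 = 1 ->
  (cs * c + 2 * sn * d) ^+ 2 + 4 * (- (1 / 2) * sn * c + cs * d) ^+ 2 =
  c ^+ 2 + 4 * d ^+ 2.
Proof.
move=> pythagoras.
have -> : c ^+ 2 + 4 * d ^+ 2 = (cs ^+ 2 + sn ^+ 2) * (c ^+ 2 + 4 * d ^+ 2).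
  by rewrite pythagoras mul1r.
by field.
Qed.

(* Once 2ta^2 dominates 3d^2, the image of a point of K under e^{tA}
   (written with cs = cos(2πt), sn = sin(2πt)) lies in K again. *)
Lemma coneK_flow (t cs sn p a c d : R) :
  0 <= t -> cs ^+ 2 + sn ^+ 2 = 1 -> 3 * d ^+ 2 <= 2 * t * a ^+ 2 ->
  coneK p a c d ->
  coneK (p + t * a) a (cs * c + 2 * sn * d) (- (1 / 2) * sn * c + cs * d).
Proof.
move=> t0 pythagoras slow K; have [a0 _] := coneK_bounds K; case: K => h p0.
have := rotation_norm c d pythagoras.
have := sqr_ge0 (- (1 / 2) * sn * c + cs * d).
split; [nra | exact: addr_ge0 (mulr_ge0 _ _)].
Qed.

(* If d = s is large compared with t, the point ((1+s^2)/2, 1, 0, s) of K is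
   mapped out of K when the rotation sends (c, d) to (2d, 0). *)
Lemma coneK_escape (t s : R) : 2 * t < 3 * s ^+ 2 ->
  coneK ((1 + s ^+ 2) / 2) 1 0 s /\ ~ coneK ((1 + s ^+ 2) / 2 + t) 1 (2 * s) 0.
Proof.
move=> fast; have s2 := sqr_ge0 s.
split; first by split; lra.
by move=> [h _]; lra.
Qed.
End ConeInequalities.

Section Coordinates.
Variable R : realType.

Definition col4 (p a c d : R) : 'cV[R]_4 :=
  \col_i (if i == 0%N :> nat then p else if i == 1%N :> nat then a
          else if i == 2%N :> nat then c else d).

Lemma K4_col4 p a c d : K4 (col4 p a c d) <-> coneK p a c d.
Proof. by rewrite /K4 /col4 /= !mxE. Qed.

Lemma col4_coords (x : 'cV[R]_4) :
  x = col4 (x 0%R 0%R) (x 1%R 0%R) (x 2%:R 0%R) (x 3%:R 0%R).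
Proof.
apply/matrixP => i j; rewrite (ord1 j) mxE.
by case: i => [[|[|[|[|i]]]] Hi] //=; congr (x _ _); apply/val_inj.
Qed.

Lemma expmA4_col4 (t p a c d : R) :
  expm (t *: A4 R) *m col4 p a c d =
  col4 (p + t * a) a (cos (2 * pi * t) * c + 2 * sin (2 * pi * t) * d)
       (- (1 / 2) * sin (2 * pi * t) * c + cos (2 * pi * t) * d).
Proof.
rewrite expmA4; apply/matrixP => i j.
rewrite /expA4 /Pm /Qm /Cm /Sm !blk_scale !blk_add !mxE !big_ord_recl big_ord0 !mxE /=.
by case: i => [[|[|[|[|i]]]] Hi] //=; ring.
Qed.

End Coordinates.

Section TopologyOfK4.
Variable R : realType.

Definition cone_defect (x : 'cV[R]_4) : R :=
  x 1%R 0%R ^+ 2 + x 2%:R 0%R ^+ 2 + x 3%:R 0%R ^+ 2 - 2 * x 0%R 0%R * x 1%R 0%R.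

Lemma continuous_cone_defect : continuous cone_defect.
Proof.
move=> x.
have coord i : {for x, continuous (fun y : 'cV[R]_4 => y i 0%R)}.
  exact: coord_continuous.
have square i : {for x, continuous (fun y : 'cV[R]_4 => y i 0%R ^+ 2)}.
  exact: cvgM (coord i) (coord i).
have cross : {for x, continuous (fun y : 'cV[R]_4 => 2 * y 0%R 0%R * y 1%R 0%R)}.
  by have := cvgM (cvgM (cvg_cst (2 : R)) (coord 0%R)) (coord 1%R); apply.
exact: cvgB (cvgD (cvgD (square 1%R) (square 2%:R)) (square 3%:R)) cross.
Qed.

Lemma K4E : @K4 R =
  cone_defect @^-1` [set r | r <= 0] `&` (fun x => x 0%R 0%R) @^-1` [set r | 0 <= r].
Proof.
by apply/seteqP; split => x /=; rewrite /K4 /cone_defect /= => -[h p0]; split => //; lra.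
Qed.

Lemma closed_K4 : closed (@K4 R).
Proof.
rewrite K4E; apply: closedI; apply: preimage_closed.
- by move=> x _; exact: continuous_cone_defect.
- exact: closed_le.
- by move=> x _; exact: coord_continuous.
- exact: closed_ge.
Qed.

Lemma interior_K4 : (@K4 R)° !=set0.
Proof.
pose U := cone_defect @^-1` [set r | r < 0] `&` (fun x => x 0%R 0%R) @^-1` [set r | 0 < r].
have open_U : open U.
  apply: openI; apply: open_comp.
  - by move=> x _; exact: continuous_cone_defect.
  - exact: open_lt.
  - by move=> x _; exact: coord_continuous.
  - exact: open_gt.
have U_sub : U `<=` (@K4 R)°.
  rewrite -open_subsetE // K4E => x [/= h1 h2]; split => /=; lra.
exists (col4 1 1 0 0); apply: U_sub.
by rewrite /U /cone_defect /col4 /= !mxE /=; split => /=; lra.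
Qed.

End TopologyOfK4.

Section SemigroupOfA4.
Variable R : realType.

Lemma is_cone_K4 : is_cone (@K4 R).
Proof.
split.
- by move=> x y Kx Ky; rewrite /K4 /= !mxE; exact: coneK_add.
- by move=> k x k0 Kx; rewrite /K4 /= !mxE; exact: coneK_scale.
- move=> x Kx; rewrite /K4 /= !mxE => /(coneK_pointed Kx) [p0 a0 c0 d0].
  rewrite [x]col4_coords p0 a0 c0 d0; apply/matrixP => i j.
  by rewrite !mxE; repeat case: ifP.
Qed.

(* Threshold 2d^2/a^2 (any threshold if a = 0, which forces c = d = 0). *)
Lemma indiv_ev_nonneg_A4 : indiv_ev_nonneg (@K4 R) (@A4 R).
Proof.
move=> x; rewrite [x]col4_coords K4_col4.
set p := x 0%R 0%R; set a := x 1%R 0%R; set c := x 2%:R 0%R; set d := x 3%:R 0%R.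
move=> K; have [a0 _] := coneK_bounds K.
exists (2 * d ^+ 2 / a ^+ 2); split; first by apply: divr_ge0; nra.
move=> t t_ge; rewrite expmA4_col4 K4_col4.
have t0 : 0 <= t by apply: le_trans t_ge; apply: divr_ge0; nra.
have slow : 3 * d ^+ 2 <= 2 * t * a ^+ 2.
  have [a_eq0 | a_neq0] := eqVneq a 0.
    case: K => h _; rewrite a_eq0 in h *; have := sqr_ge0 c; nra.
  rewrite ler_pdivrMr ?exprn_gt0 ?lt_def ?a_neq0 // in t_ge; nra.
exact: coneK_flow t0 (cos2Dsin2 _) slow K.
Qed.

(* The times t = n + 1/4 with cos(2πt) = 0, sin(2πt) = 1 are unbounded. *)
Lemma cos0_sin1_unbounded (t0 : R) :
  exists t, t0 <= t /\ cos (2 * pi * t) = 0 /\ sin (2 * pi * t) = 1.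
Proof.
pose n := (Num.truncn t0).+1.
have t0_lt : t0 < n%:R by exact: truncnS_gt.
exists (n%:R + 1 / 4); split; first lra.
have -> : 2 * pi * (n%:R + 1 / 4) = pi / 2 + (pi *+ 2) *+ n :> R.
  by rewrite -mulrnA -[pi *+ _]mulr_natr natrM; field.
by rewrite (periodicn (@cosD2pi R)) (periodicn (@sinD2pi R)) cos_pihalf sin_pihalf.
Qed.

(* At such a time t >= t0, the vector of [coneK_escape] with s = t + 1 leaves K. *)
Lemma not_unif_ev_nonneg_A4 : ~ unif_ev_nonneg (@K4 R) (@A4 R).
Proof.
move=> [t0 [t0_ge0 unif]].
have [t [t_ge [cos0 sin1]]] := cos0_sin1_unbounded t0.
have t_ge0 : 0 <= t by lra.
have fast : 2 * t < 3 * (t + 1) ^+ 2 by nra.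
have [Kx not_Ky] := coneK_escape fast.
apply: not_Ky; move: (unif t t_ge _ ((K4_col4 _ _ _ _).2 Kx)).
rewrite expmA4_col4 K4_col4 cos0 sin1; congr coneK; ring.
Qed.

End SemigroupOfA4.

Theorem mainTheorem4 (R : realType) :
  [/\ closed (@K4 R), is_cone (@K4 R), interior (@K4 R) !=set0,
      indiv_ev_nonneg (@K4 R) (@A4 R) & ~ unif_ev_nonneg (@K4 R) (@A4 R)].
Proof.
split.
- exact: closed_K4.
- exact: is_cone_K4.
- exact: interior_K4.
- exact: indiv_ev_nonneg_A4.
- exact: not_unif_ev_nonneg_A4.
Qed.
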